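(* Let $\rho\in L^1(\mathbb R^2)$, $\rho\ge0$, satisfy $\int_{\mathbb R^2}\rho\ln\rho\le C_0$, $\int_{\mathbb R^2}\rho=\beta$, $\int_{\mathbb R^2}|x|^2\rho\le C_0$, and define $u(x)=-\frac1{2\pi}\int_{\mathbb R^2}\ln|x-y|\rho(y)\,d^2y$ for $x\in\mathbb R^2$. Then there exist constants $C,R$ depending only on $C_0$ and $\beta$ such that $$\Big|u(x)+\frac{\beta}{2\pi}\ln|x|\Big|\le C\quad\text{for all }|x|>R.$$ *)

(* R^2 is modelled as R * R with the
   product Lebesgue measure (lebesgue_measure \x lebesgue_measure). *)
From HB Require Import structures.
From mathcomp Require Import all_boot all_order all_algebra.
From mathcomp Require Import all_classical all_reals all_analysis.
Set Implicit Arguments. Unset Strict Implicit. Unset Printing Implicit Defensive.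
Import Order.TTheory GRing.Theory Num.Theory.
Local Open Scope classical_set_scope.
Local Open Scope ring_scope.

Definition leb2 (R : realType) :=
  ((@lebesgue_measure R) \x (@lebesgue_measure R))%E.

Arguments leb2 R : clear implicits.

Definition sqnorm2 (R : realType) (x : R * R) : R := x.1 ^+ 2 + x.2 ^+ 2.
Definition norm2 (R : realType) (x : R * R) : R := Num.sqrt (sqnorm2 x).

Definition logpot (R : realType) (rho : R * R -> R) (x : R * R) : R :=
  - (2 * pi)^-1 * Rintegral (leb2 R) [set: R * R]
      (fun y => ln (norm2 (x.1 - y.1, x.2 - y.2)) * rho y).

(* Write [u(x) + beta/(2 pi) ln|x| = -1/(2 pi) \int (ln|x - y| - ln|x|) rho(y) dy].  For
   [|x| > 1] the factor [|ln|x - y| - ln|x||] is at most [2 + 2|y|^2 + ln^-|x - y|^2], since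
   [|x - y|^2] and [|x|^2] agree up to a factor 2 and an additive [2|y|^2]; mass and second
   moment control the first two terms.  For the last one, Young's inequality
   [a ln c <= a ln a + c] with [c = 1/|x - y|] gives
   [rho ln^-|x - y|^2 <= 2 (rho ln rho)^+ + 2/|x - y|], and [1/|x - y|] is dominated by a
   weighted sum of indicators of dyadic squares centred at [x] whose integral does not
   depend on [x].  Finally [\int (rho ln rho)^+ <= C0 + \int (rho ln rho)^-], and Young's
   inequality with [c = 2^(-3m)], [2^m] the dyadic scale of [|y|], bounds [(rho ln rho)^-] by
   [(6 + 3|y|^2) rho] plus another summable dyadic step function. *)

From HB Require Import structures.
From mathcomp Require Import all_boot all_order all_algebra.
From mathcomp Require Import all_classical all_reals all_analysis.
From mathcomp Require Import measurable_realfun.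
From mathcomp Require Import ring lra.
Import Order.TTheory GRing.Theory Num.Theory.
Local Open Scope classical_set_scope.
Local Open Scope ring_scope.

Section real_inequalities.
Context {R : realType}.
Implicit Types a c q s t u : R.

Lemma ln_le_subr1 u : 0 < u -> ln u <= u - 1.
Proof.
move=> u0; have := @le_ln1Dx R (u - 1); rewrite subrKC; apply.
by rewrite ltrBrDl addrN.
Qed.

Lemma ln_sqrt s : ln (Num.sqrt s) = ln s / 2.
Proof.
have [s0|s0] := leP s 0.
  have /eqP-> : Num.sqrt s == 0 by rewrite sqrtr_eq0.
  by rewrite !ln0 ?mul0r.
rewrite -{2}(sqr_sqrtr (ltW s0)) lnXn ?sqrtr_gt0 //; lra.
Qed.

Lemma xlnx_young a c : 0 <= a -> 0 < c -> a * ln c <= a * ln a + c.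
Proof.
move=> a0 c0; have [->|a_neq0] := eqVneq a 0; first by rewrite !mul0r add0r ltW.
have a_gt0 : 0 < a by rewrite lt_def a_neq0.
have := ln_le_subr1 _ (divr_gt0 c0 a_gt0); rewrite ln_div ?posrE // => h.
rewrite -lerBlDl -mulrBr (le_trans (ler_wpM2l a0 h)) //.
by rewrite mulrBr mulr1 mulrCA divff ?mulr1 // lerBlDr lerDl ltW.
Qed.

Lemma dyadic_floor t : 1 <= t -> exists k : nat, 2 ^+ k <= t < 2 ^+ k.+1.
Proof.
move=> t1; have n_gt0 : (0 < Num.truncn t)%N by rewrite truncn_gt0.
exists (trunc_log 2 (Num.truncn t)); have /andP[tn nt] := truncn_itv (le_trans ler01 t1).
apply/andP; split.
  by apply: le_trans tn; rewrite -natrX ler_nat trunc_logP.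
by apply: lt_le_trans nt _; rewrite -natrX ler_nat trunc_log_ltn.
Qed.

Lemma dyadic_ceil t : 0 <= t -> exists m : nat, t < 2 ^+ m /\ m%:R <= t.
Proof.
move=> t0; have [t1|t1] := ltP t 1; first by exists 0%N; rewrite expr0.
have [k /andP[kt tk]] := dyadic_floor _ t1; exists k.+1; split => //.
by apply: le_trans kt; rewrite -natrX ler_nat ltn_expl.
Qed.

Lemma neg_xlnx_le a (m : nat) : 0 <= a ->
  - (a * ln a) <= 3 * m%:R * a + (2 ^+ m ^+ 3)^-1.
Proof.
move=> a0; have c0 : 0 < (2 ^+ m ^+ 3 : R)^-1 by rewrite invr_gt0 !exprn_gt0.
have := xlnx_young a _ a0 c0; rewrite lnV ?posrE ?exprn_gt0 // !lnXn // mulrN.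
have -> : a * (ln 2 *+ m *+ 3) = ln 2 * (3 * m%:R * a).
  by rewrite -[ln 2 *+ m *+ 3]mulr_natl -[ln 2 *+ m]mulr_natl; ring.
have ln2_le1 : ln 2 <= 1 :> R by have := ln_le_subr1 2 ltac:(by []); lra.
have : ln 2 * (3 * m%:R * a) <= 3 * m%:R * a by rewrite ler_piMl ?mulr_ge0.
lra.
Qed.

Lemma norm_lnB_le s t q : 1 < t -> s <= 2 * t + 2 * q -> t <= 2 * s + 2 * q ->
  0 <= q -> `|ln s - ln t| <= 3 + 4 * q + Num.max (- ln s) 0.
Proof.
move=> t1 st ts q0; have t0 : 0 < t by apply: lt_trans t1.
have lnt_gt0 := ln_gt0 t1.
have M1 : - ln s <= Num.max (- ln s) 0 by rewrite le_max lexx.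
have M0 : 0 <= Num.max (- ln s) 0 by rewrite le_max lexx orbT.
have lnt_le := ln_le_subr1 _ t0.
have [s0|s0] := leP s 0; first by rewrite ln0 // in M1 M0 *; rewrite ler_norml; lra.
rewrite ler_norml; apply/andP; split; last first.
  have := ln_le_subr1 _ (divr_gt0 s0 t0); rewrite ln_div ?posrE //.
  have : s / t <= 2 + 2 * q by rewrite ler_pdivrMr //; nra.
  lra.
have [qt|qt] := leP (4 * q) t; last by lra.
have := ln_le_subr1 _ (divr_gt0 t0 s0); rewrite ln_div ?posrE //.
have : t / s <= 4 by rewrite ler_pdivrMr //; lra.
lra.
Qed.

Lemma norm_le_1Dsqr t : `|t| <= 1 + t ^+ 2.
Proof. by rewrite -real_normK ?num_real //; have := normr_ge0 t; nra. Qed.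

End real_inequalities.

Section nonneg_integral_bounds.
Local Open Scope ereal_scope.
Context {d : measure_display} {T : measurableType d} {R : realType}.
Variable mu : {measure set T -> \bar R}.
Implicit Types (f g : T -> \bar R) (a b k : R).

Lemma ge0_integralD_le f g a b :
  measurable_fun setT f -> measurable_fun setT g ->
  (forall y, 0 <= f y) -> (forall y, 0 <= g y) ->
  \int[mu]_(y in setT) f y <= a%:E -> \int[mu]_(y in setT) g y <= b%:E ->
  \int[mu]_(y in setT) (f y + g y) <= (a + b)%:E.
Proof. by move=> mf mg f0 g0 fa gb; rewrite ge0_integralD // EFinD leeD. Qed.

Lemma ge0_integralZl_le f k a : measurable_fun setT f -> (forall y, 0 <= f y) ->
  (0 <= k)%R -> \int[mu]_(y in setT) f y <= a%:E ->
  \int[mu]_(y in setT) (k%:E * f y) <= (k * a)%:E.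
Proof. by move=> mf f0 k0 fa; rewrite ge0_integralZl // EFinM lee_wpmul2l. Qed.

Lemma integral_funepos_le f a b :
  \int[mu]_(y in setT) f y <= a%:E -> \int[mu]_(y in setT) f^\- y <= b%:E ->
  \int[mu]_(y in setT) f^\+ y <= (a + b)%:E.
Proof.
move=> fa fb; have fneg_fin : \int[mu]_(y in setT) f^\- y \is a fin_num.
  by rewrite ge0_fin_numE ?integral_ge0 // (le_lt_trans fb (ltry b)).
rewrite integralE leeBlDr // in fa.
by rewrite EFinD (le_trans fa) // leeD2l.
Qed.

End nonneg_integral_bounds.

Section step_series.
Local Open Scope ereal_scope.
Context {d : measure_display} {T : measurableType d} {R : realType}.
Variables (w : nat -> R) (B : nat -> set T).

Definition step_series (y : T) : \bar R := \sum_(0 <= k <oo) (w k * \1_(B k) y)%:E.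

Hypothesis w_ge0 : forall k, (0 <= w k)%R.
Hypothesis measurable_B : forall k, measurable (B k).

Let step_ge0 k y : 0 <= (w k * \1_(B k) y)%:E.
Proof. by rewrite lee_fin mulr_ge0. Qed.

Let measurable_step k : measurable_fun setT (fun y => (w k * \1_(B k) y)%:E).
Proof.
by apply/measurable_EFinP/measurable_funM; [exact: measurable_cst|exact: measurable_indic].
Qed.

Lemma step_series_ge0 y : 0 <= step_series y.
Proof. exact: nneseries_ge0. Qed.

Lemma measurable_step_series : measurable_fun setT step_series.
Proof. exact: ge0_emeasurable_sum. Qed.

Lemma step_series_ge k y : B k y -> (w k)%:E <= step_series y.
Proof.
move=> Bky; apply: le_trans (nneseries_lim_ge k.+1 (fun n _ _ => step_ge0 n y)).
rewrite big_nat_recr //= indicE mem_set // mulr1 leeDr //.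
by apply: sume_ge0 => n _; exact: step_ge0.
Qed.

Lemma integral_step_series (mu : {measure set T -> \bar R}) :
  \int[mu]_(y in setT) step_series y = \sum_(0 <= k <oo) (w k)%:E * mu (B k).
Proof.
rewrite integral_nneseries //; apply: eq_eseriesr => k _.
under eq_integral do rewrite EFinM.
rewrite ge0_integralZl ?integral_indic ?setIT ?lee_fin //.
exact/measurable_EFinP/measurable_indic.
Qed.

End step_series.

Section squares.
Context {R : realType}.
Implicit Types (c y : R * R) (r : R).

Definition square c r : set (R * R) :=
  `[c.1 - r, c.1 + r]%classic `*` `[c.2 - r, c.2 + r]%classic.

Lemma measurable_square c r : measurable (square c r).
Proof. by apply: measurableX; exact: measurable_itv. Qed.

Lemma squareP c r y : `|y.1 - c.1| <= r -> `|y.2 - c.2| <= r -> square c r y.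
Proof.
rewrite !ler_norml /square /= !in_itv /= => /andP[? ?] /andP[? ?].
by split; apply/andP; split; lra.
Qed.

Lemma lebesgue_measure_interval (a b : R) : a <= b ->
  lebesgue_measure (`[a, b]%classic : set R) = (b - a)%:E.
Proof.
move=> ab; rewrite lebesgue_measure_itv /= lte_fin.
by case: ltP => // ba; rewrite (@le_anti _ _ a b) ?ab ?subrr.
Qed.

Lemma leb2_square c r : 0 <= r -> leb2 R (square c r) = ((2 * r) ^+ 2)%:E.
Proof.
move=> r0; rewrite /leb2 product_measure1E ?measurable_itv //.
have sq k : k - r <= k + r by lra.
have := lebesgue_measure_interval _ _ (sq c.1).
have := lebesgue_measure_interval _ _ (sq c.2).
rewrite /= => -> ->; rewrite -EFinM; congr EFin; ring.
Qed.

End squares.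

Section nonneg_integrable.
Local Open Scope ereal_scope.
Context {d : measure_display} {T : measurableType d} {R : realType}.
Variable mu : {measure set T -> \bar R}.
Variables (f : T -> R) (a : R).
Hypotheses (f_ge0 : forall y, (0 <= f y)%R)
  (f_le : \int[mu]_(y in setT) (f y)%:E <= a%:E).

Let integral_ge0 : 0 <= \int[mu]_(y in setT) (f y)%:E.
Proof. by apply: integral_ge0 => y _; rewrite lee_fin. Qed.

Let integral_fin_num : \int[mu]_(y in setT) (f y)%:E \is a fin_num.
Proof. by rewrite ge0_fin_numE // (le_lt_trans f_le (ltry a)). Qed.

Lemma ge0_integrable_le : measurable_fun setT f -> mu.-integrable setT (EFin \o f).
Proof.
move=> mf; apply/integrableP; split; first exact/measurable_EFinP.
under eq_integral do rewrite /= ger0_norm //.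
by rewrite -ge0_fin_numE.
Qed.

Lemma ge0_Rintegral_le : (\int[mu]_(y in setT) f y <= a)%R.
Proof. by rewrite -lee_fin fineK. Qed.

End nonneg_integrable.

Section plane.
Context {R : realType}.
Implicit Types (x y : R * R).

Definition neg_ln_sqdist x y : R := Num.max (- ln (sqnorm2 (x.1 - y.1, x.2 - y.2))) 0.

Lemma measurable_sqnorm2 : measurable_fun setT (@sqnorm2 R).
Proof.
by apply: measurable_funD; apply: measurable_funX; [exact: measurable_fst|exact: measurable_snd].
Qed.

Lemma measurable_ln_sqdist x :
  measurable_fun setT (fun y => ln (sqnorm2 (x.1 - y.1, x.2 - y.2))).
Proof.
apply: (measurableT_comp (@measurable_ln R)).
by apply: measurable_funD; apply: measurable_funX; apply: measurable_funB;
  [exact: measurable_cst|exact: measurable_fst|exact: measurable_cst|exact: measurable_snd].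
Qed.

Lemma measurable_neg_ln_sqdist x : measurable_fun setT (neg_ln_sqdist x).
Proof.
apply: measurable_maxr; last exact: measurable_cst.
by apply: measurable_funN; exact: measurable_ln_sqdist.
Qed.

Lemma ln_norm2_dev_le x y : 1 < sqnorm2 x ->
  `|ln (norm2 (x.1 - y.1, x.2 - y.2)) - ln (norm2 x)| <= 2 + 2 * sqnorm2 y + neg_ln_sqdist x y.
Proof.
move=> x1; rewrite /norm2 !ln_sqrt /neg_ln_sqdist; set s := sqnorm2 _.
have q0 : 0 <= sqnorm2 y by rewrite addr_ge0 ?sqr_ge0.
have s_le : s <= 2 * sqnorm2 x + 2 * sqnorm2 y.
  by rewrite /s /sqnorm2 /=; have := sqr_ge0 (x.1 + y.1); have := sqr_ge0 (x.2 + y.2); nra.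
have x_le : sqnorm2 x <= 2 * s + 2 * sqnorm2 y.
  rewrite /s /sqnorm2 /=.
  by have := sqr_ge0 (x.1 - 2 * y.1); have := sqr_ge0 (x.2 - 2 * y.2); nra.
have := norm_lnB_le _ _ _ x1 s_le x_le q0.
rewrite -mulrBl normrM (@ger0_norm _ 2^-1) ?invr_ge0 //.
have : 0 <= Num.max (- ln s) 0 by rewrite le_max lexx orbT.
lra.
Qed.

End plane.

Section majorants.
Context {R : realType}.
Implicit Types (a : R) (x y : R * R).

(* [sing_majorant x] dominates [y |-> 1/|x - y|]: when [2^-(k+1) < |x - y| <= 2^-k], its
   k-th term is [2^(k+1)]. *)
Let sing_weight k : R := 2 ^+ k.+1.
Let sing_square x k := square x (2 ^+ k)^-1.
Let decay_weight k : R := (2 ^+ k ^+ 3)^-1.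
Let decay_square k : set (R * R) := square (0%R, 0%R) (2 ^+ k).

Definition sing_majorant x := step_series sing_weight (sing_square x).
Definition decay_majorant := step_series decay_weight decay_square.

Let sing_weight_ge0 k : (0 <= sing_weight k)%R. Proof. exact: exprn_ge0. Qed.
Let decay_weight_ge0 k : (0 <= decay_weight k)%R.
Proof. by rewrite invr_ge0 !exprn_ge0. Qed.

Lemma sing_majorant_ge0 x y : (0 <= sing_majorant x y)%E.
Proof. exact: step_series_ge0. Qed.

Lemma decay_majorant_ge0 y : (0 <= decay_majorant y)%E.
Proof. exact: step_series_ge0. Qed.

Lemma measurable_sing_majorant x : measurable_fun setT (sing_majorant x).
Proof. by apply: measurable_step_series => // k; exact: measurable_square. Qed.

Lemma measurable_decay_majorant : measurable_fun setT decay_majorant.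
Proof. by apply: measurable_step_series => // k; exact: measurable_square. Qed.

Lemma eseries_half_geometric (r : R) :
  (\sum_(0 <= k <oo) (r / (2 ^ (k + 1))%:R)%:E = r%:E)%E.
Proof.
by have := @cvg_geometric_eseries_half R r 0; rewrite expr0 divr1 => /cvg_lim <-.
Qed.

Lemma integral_sing_majorant x :
  (\int[leb2 R]_(y in setT) sing_majorant x y = 16%:E)%E.
Proof.
rewrite integral_step_series => [|k|k]; last exact: measurable_square; last by [].
rewrite -eseries_half_geometric; apply: eq_eseriesr => k _.
rewrite (_ : 16 / _ = sing_weight k * (2 * (2 ^+ k)^-1) ^+ 2); last first.
  by rewrite /sing_weight addn1 natrX !exprS; field; rewrite expf_neq0.
by rewrite EFinM; congr (_ * _)%E; apply: leb2_square; rewrite invr_ge0 exprn_ge0.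
Qed.

Lemma integral_decay_majorant :
  (\int[leb2 R]_(y in setT) decay_majorant y = 8%:E)%E.
Proof.
rewrite integral_step_series => [|k|k]; last exact: measurable_square; last by [].
rewrite -eseries_half_geometric; apply: eq_eseriesr => k _.
rewrite (_ : 8 / _ = decay_weight k * (2 * 2 ^+ k) ^+ 2); last first.
  by rewrite /decay_weight addn1 natrX !exprS; field; rewrite expf_neq0.
by rewrite EFinM; congr (_ * _)%E; apply: leb2_square; rewrite exprn_ge0.
Qed.

Lemma neg_xlnx_le_decay a y : 0 <= a ->
  ((Num.max (- (a * ln a)) 0)%:E <= ((6 + 3 * sqnorm2 y) * a)%:E + decay_majorant y)%E.
Proof.
move=> a0; set t := (`|y.1| + `|y.2|)%R.
have [m [tm mt]] := dyadic_ceil t (addr_ge0 (normr_ge0 _) (normr_ge0 _)).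
have ge_decay : ((decay_weight m)%:E <= decay_majorant y)%E.
  apply: step_series_ge => //; apply: squareP; rewrite subr0;
    by have := normr_ge0 y.1; have := normr_ge0 y.2; rewrite /t in tm; lra.
apply: le_trans (leeD2l _ ge_decay); rewrite -EFinD lee_fin ge_max; apply/andP; split.
  have mq : 3 * m%:R <= 6 + 3 * sqnorm2 y.
    by have := norm_le_1Dsqr y.1; have := norm_le_1Dsqr y.2; rewrite /sqnorm2 /t in mt *; lra.
  by have := ler_wpM2r a0 mq; have := neg_xlnx_le a m a0; rewrite /decay_weight; lra.
by rewrite addr_ge0 ?decay_weight_ge0 // mulr_ge0 // addr_ge0 // mulr_ge0 // addr_ge0 ?sqr_ge0.
Qed.

Lemma neg_ln_sqdist_le_sing a x y : 0 <= a ->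
  ((a * neg_ln_sqdist x y)%:E <= (2 * Num.max (a * ln a) 0)%:E + 2%:E * sing_majorant x y)%E.
Proof.
move=> a0; rewrite /neg_ln_sqdist; set s := sqnorm2 _.
have pos0 : 0 <= 2 * Num.max (a * ln a) 0 by rewrite mulr_ge0 // le_max lexx orbT.
have sing0 : (0 <= 2%:E * sing_majorant x y)%E by rewrite mule_ge0 // sing_majorant_ge0.
have [s1|s1] := leP 1 s.
  rewrite (_ : Num.max _ _ = 0) ?mulr0 ?adde_ge0 //.
  by apply/max_idPr; rewrite lerNl oppr0 ln_ge0.
have [s0|s0] := leP s 0; first by rewrite ln0 // oppr0 maxxx mulr0 adde_ge0.
set dinv := (Num.sqrt s)^-1.
have dinv_gt1 : 1 < dinv by rewrite invf_gt1 ?sqrtr_gt0 // -sqrtr1 ltr_sqrt.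
have [k /andP[kd dk]] := dyadic_floor dinv (ltW dinv_gt1).
have ge_sing : ((sing_weight k)%:E <= sing_majorant x y)%E.
  have d_le : Num.sqrt s <= (2 ^+ k)^-1.
    by rewrite -[Num.sqrt s]invrK lef_pV2 ?posrE ?invr_gt0 ?sqrtr_gt0 ?exprn_gt0.
  have dist_le i j : (i - j) ^+ 2 <= s -> `|j - i| <= (2 ^+ k)^-1.
    by move=> ij; rewrite distrC -sqrtr_sqr (le_trans _ d_le) // ler_sqrt // ltW.
  by apply: step_series_ge => //; apply: squareP; apply: dist_le;
    rewrite /s /sqnorm2 ?lerDl ?lerDr sqr_ge0.
have two_ge_sing : (2%:E * (sing_weight k)%:E <= 2%:E * sing_majorant x y)%E.
  by rewrite lee_wpmul2l.
apply: le_trans (leeD2l _ two_ge_sing); rewrite -EFinM -EFinD lee_fin.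
have := xlnx_young a dinv a0 (lt_trans ltr01 dinv_gt1).
rewrite lnV ?posrE ?sqrtr_gt0 // ln_sqrt /sing_weight.
have -> : Num.max (- ln s) 0 = - ln s.
  by apply/max_idPl; rewrite lerNr oppr0 ln_le0 // ltW.
have : a * ln a <= Num.max (a * ln a) 0 by rewrite le_max lexx.
have := ltW dk; lra.
Qed.

End majorants.

Section logarithmic_potential.
Context {R : realType}.
Local Notation mu := (leb2 R).
Variables (C0 beta : R) (rho : R * R -> R).
Hypothesis rho_ge0 : forall y, 0 <= rho y.
Hypothesis rho_integrable : mu.-integrable setT (EFin \o rho).
Hypothesis entropy_le : (\int[mu]_(y in setT) (rho y * ln (rho y))%:E <= C0%:E)%E.
Hypothesis mass_rho : (\int[mu]_(y in setT) (rho y)%:E = beta%:E)%E.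
Hypothesis moment_le : (\int[mu]_(y in setT) (sqnorm2 y * rho y)%:E <= C0%:E)%E.

Let measurable_rho : measurable_fun setT rho.
Proof. by case/integrableP: rho_integrable => /measurable_EFinP. Qed.

Let sqnorm2_ge0 (y : R * R) : 0 <= sqnorm2 y.
Proof. by rewrite addr_ge0 ?sqr_ge0. Qed.

Let measurable_moment : measurable_fun setT (fun y => sqnorm2 y * rho y).
Proof. exact: measurable_funM measurable_sqnorm2 measurable_rho. Qed.

Let mass_le : (\int[mu]_(y in setT) (rho y)%:E <= beta%:E)%E.
Proof. by rewrite mass_rho. Qed.

Let measurable_xlnx_rho : measurable_fun setT (fun y => rho y * ln (rho y)).
Proof. exact/measurable_funM/(measurableT_comp (@measurable_ln R)). Qed.

Lemma integral_neg_entropy_le :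
  (\int[mu]_(y in setT) (Num.max (- (rho y * ln (rho y))) 0)%:E
    <= (6 * beta + (3 * C0 + 8))%:E)%E.
Proof.
apply: (@le_trans _ _ (\int[mu]_(y in setT)
    (6%:E * (rho y)%:E + (3%:E * (sqnorm2 y * rho y)%:E + decay_majorant y)))%E).
  apply: ge0_le_integral => //.
  - by move=> y _; rewrite lee_fin le_max lexx orbT.
  - apply/measurable_EFinP/measurable_maxr; last exact: measurable_cst.
    exact: measurable_funN.
  - apply: emeasurable_funD; first exact/measurable_funeM/measurable_EFinP.
    apply: emeasurable_funD; last exact: measurable_decay_majorant.
    exact/measurable_funeM/measurable_EFinP.
  - move=> y _; apply: le_trans (neg_xlnx_le_decay _ y (rho_ge0 y)) _.
    by rewrite mulrDl -mulrA EFinD -addeA (EFinM 6) (EFinM 3).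
apply: ge0_integralD_le => //.
- exact/measurable_funeM/measurable_EFinP.
- apply: emeasurable_funD; last exact: measurable_decay_majorant.
  exact/measurable_funeM/measurable_EFinP.
- by move=> y; rewrite mule_ge0 ?lee_fin.
- by move=> y; rewrite adde_ge0 ?decay_majorant_ge0 ?mule_ge0 ?lee_fin ?mulr_ge0.
- by apply: ge0_integralZl_le => //; by [exact/measurable_EFinP|move=> y; rewrite lee_fin].
apply: ge0_integralD_le => //.
- exact/measurable_funeM/measurable_EFinP.
- exact: measurable_decay_majorant.
- by move=> y; rewrite mule_ge0 ?lee_fin ?mulr_ge0.
- exact: decay_majorant_ge0.
- apply: ge0_integralZl_le => //;
    by [exact/measurable_EFinP|move=> y; rewrite lee_fin mulr_ge0].
- by rewrite integral_decay_majorant.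
Qed.

Lemma integral_pos_entropy_le :
  (\int[mu]_(y in setT) (Num.max (rho y * ln (rho y)) 0)%:E
    <= (C0 + (6 * beta + (3 * C0 + 8)))%:E)%E.
Proof.
pose f y := (rho y * ln (rho y))%:E.
have posE y : (Num.max (rho y * ln (rho y)) 0)%:E = (f^\+ y)%E by rewrite funeposE EFin_max.
have negE y : (f^\- y)%E = (Num.max (- (rho y * ln (rho y))) 0)%:E.
  by rewrite funenegE EFin_max EFinN.
under eq_integral do rewrite posE.
apply: integral_funepos_le entropy_le _.
under eq_integral do rewrite negE.
exact: integral_neg_entropy_le.
Qed.

Let measurable_rho_neg_ln_sqdist x : measurable_fun setT (fun y => rho y * neg_ln_sqdist x y).
Proof. exact: measurable_funM measurable_rho (measurable_neg_ln_sqdist x). Qed.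

Let rho_neg_ln_sqdist_ge0 x y : 0 <= rho y * neg_ln_sqdist x y.
Proof. by rewrite mulr_ge0 // le_max lexx orbT. Qed.

Lemma integral_rho_neg_ln_sqdist_le x :
  (\int[mu]_(y in setT) (rho y * neg_ln_sqdist x y)%:E
    <= (2 * (C0 + (6 * beta + (3 * C0 + 8))) + 2 * 16)%:E)%E.
Proof.
have measurable_pos : measurable_fun setT (fun y => (Num.max (rho y * ln (rho y)) 0)%:E).
  by apply/measurable_EFinP/measurable_maxr; last exact: measurable_cst.
apply: (@le_trans _ _ (\int[mu]_(y in setT)
    (2%:E * (Num.max (rho y * ln (rho y)) 0)%:E + 2%:E * sing_majorant x y))%E).
  apply: ge0_le_integral => //.
  - by move=> y _; rewrite lee_fin.
  - by apply/measurable_EFinP; apply: measurable_rho_neg_ln_sqdist.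
  - by apply: emeasurable_funD; apply: measurable_funeM => //; exact: measurable_sing_majorant.
  - by move=> y _; rewrite -EFinM neg_ln_sqdist_le_sing.
apply: ge0_integralD_le => //.
- exact: measurable_funeM.
- by apply: measurable_funeM; exact: measurable_sing_majorant.
- by move=> y; rewrite mule_ge0 ?lee_fin // le_max lexx orbT.
- by move=> y; rewrite mule_ge0 ?sing_majorant_ge0.
- by apply: ge0_integralZl_le integral_pos_entropy_le => // y; rewrite lee_fin le_max lexx orbT.
- apply: ge0_integralZl_le => //; last by rewrite integral_sing_majorant.
  + exact: measurable_sing_majorant.
  + exact: sing_majorant_ge0.
Qed.

Let dev_bound x y := (2 + 2 * sqnorm2 y + neg_ln_sqdist x y) * rho y.

Let dev_bound_ge0 x y : 0 <= dev_bound x y.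
Proof. by rewrite mulr_ge0 // !addr_ge0 ?mulr_ge0 // le_max lexx orbT. Qed.

Let measurable_dev_bound x : measurable_fun setT (dev_bound x).
Proof.
apply: measurable_funM measurable_rho; apply: measurable_funD; last exact: measurable_neg_ln_sqdist.
apply: measurable_funD; first exact: measurable_cst.
by apply: measurable_funM; [exact: measurable_cst|exact: measurable_sqnorm2].
Qed.

Lemma integral_dev_bound_le x :
  (\int[mu]_(y in setT) (dev_bound x y)%:E <= (14 * beta + 10 * C0 + 48)%:E)%E.
Proof.
rewrite (_ : 14 * beta + _ + _
  = 2 * beta + (2 * C0 + (2 * (C0 + (6 * beta + (3 * C0 + 8))) + 2 * 16))); last by ring.
have dev_boundE y : (dev_bound x y)%:E = (2%:E * (rho y)%:E
    + (2%:E * (sqnorm2 y * rho y)%:E + (rho y * neg_ln_sqdist x y)%:E))%E.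
  by rewrite -!EFinM -!EFinD /dev_bound; congr EFin; ring.
under eq_integral do rewrite dev_boundE.
apply: ge0_integralD_le => //.
- exact/measurable_funeM/measurable_EFinP.
- apply: emeasurable_funD; last by apply/measurable_EFinP; apply: measurable_rho_neg_ln_sqdist.
  exact/measurable_funeM/measurable_EFinP.
- by move=> y; rewrite mule_ge0 ?lee_fin.
- by move=> y; rewrite adde_ge0 ?mule_ge0 ?lee_fin ?rho_neg_ln_sqdist_ge0 ?mulr_ge0.
- by apply: ge0_integralZl_le => //; by [exact/measurable_EFinP|move=> y; rewrite lee_fin].
apply: ge0_integralD_le => //.
- exact/measurable_funeM/measurable_EFinP.
- by apply/measurable_EFinP; apply: measurable_rho_neg_ln_sqdist.
- by move=> y; rewrite mule_ge0 ?lee_fin ?mulr_ge0.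
- by move=> y; rewrite lee_fin.
- by apply: ge0_integralZl_le => //; by [exact/measurable_EFinP|move=> y; rewrite lee_fin mulr_ge0].
- exact: integral_rho_neg_ln_sqdist_le.
Qed.

Let log_dev x y := (ln (norm2 (x.1 - y.1, x.2 - y.2)) - ln (norm2 x)) * rho y.

Let log_dev_le x y : 1 < sqnorm2 x -> `|log_dev x y| <= dev_bound x y.
Proof. by move=> x1; rewrite normrM (ger0_norm (rho_ge0 y)) ler_wpM2r // ln_norm2_dev_le. Qed.

Let measurable_log_dev x : measurable_fun setT (log_dev x).
Proof.
rewrite (_ : log_dev x = fun y =>
    (ln (sqnorm2 (x.1 - y.1, x.2 - y.2)) / 2 - ln (norm2 x)) * rho y).
  apply: measurable_funM measurable_rho; apply: measurable_funB; last exact: measurable_cst.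
  exact: measurable_funM (measurable_ln_sqdist x) (measurable_cst _).
by apply/funext => y; rewrite /log_dev /norm2 ln_sqrt.
Qed.

Lemma log_dev_integrable x : 1 < sqnorm2 x -> mu.-integrable setT (EFin \o log_dev x).
Proof.
move=> x1; have := ge0_integrable_le mu (dev_bound x) _ (dev_bound_ge0 x)
  (integral_dev_bound_le x) (measurable_dev_bound x).
apply: le_integrable => //; first by apply/measurable_EFinP; exact: measurable_log_dev.
by move=> y _ /=; rewrite (ger0_norm (dev_bound_ge0 x y)); exact: log_dev_le.
Qed.

Lemma Rintegral_abs_log_dev_le x : 1 < sqnorm2 x ->
  \int[mu]_(y in setT) `|log_dev x y| <= 14 * beta + 10 * C0 + 48.
Proof.
move=> x1; apply: ge0_Rintegral_le => //; apply: le_trans (integral_dev_bound_le x).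
apply: ge0_le_integral => //.
- apply/measurable_EFinP; apply: measurableT_comp (measurable_log_dev x).
  exact: normr_measurable.
- by apply/measurable_EFinP; exact: measurable_dev_bound.
- by move=> y _; rewrite lee_fin log_dev_le.
Qed.

Lemma logpot_deviation_le x : 1 < norm2 x ->
  `|logpot rho x + beta / (2 * pi) * ln (norm2 x)|
    <= (2 * pi)^-1 * (14 * beta + 10 * C0 + 48).
Proof.
move=> x1; have sqx1 : 1 < sqnorm2 x.
  by rewrite ltNge; apply: contraTN x1 => x_le1; rewrite -leNgt /norm2 -sqrtr1 ler_sqrt.
have rho_integrableZ : mu.-integrable setT (EFin \o (fun y => ln (norm2 x) * rho y)).
  apply: (eq_integrable measurableT _ _ _
    (integrableZl measurableT (ln (norm2 x)) rho_integrable)).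
  by move=> y _; rewrite /= EFinM.
rewrite /logpot; have -> : \int[mu]_(y in setT) (ln (norm2 (x.1 - y.1, x.2 - y.2)) * rho y)
    = \int[mu]_(y in setT) (log_dev x y + ln (norm2 x) * rho y).
  by apply: eq_Rintegral => y _; rewrite /log_dev; ring.
rewrite RintegralD ?log_dev_integrable // RintegralZl //.
rewrite [\int[mu]_(y in setT) rho y]/Rintegral mass_rho /=.
set I := \int[mu]_(y in setT) log_dev x y.
have -> : - (2 * pi)^-1 * (I + ln (norm2 x) * beta) + beta / (2 * pi) * ln (norm2 x)
   = - ((2 * pi)^-1 * I) by ring.
have inv_two_pi_gt0 : 0 < (2 * pi)^-1 :> R by rewrite invr_gt0 mulr_gt0 // pi_gt0.
rewrite normrN normrM (gtr0_norm inv_two_pi_gt0) ler_pM2l //.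
apply: le_trans (Rintegral_abs_log_dev_le x sqx1).
exact/le_normr_Rintegral/log_dev_integrable.
Qed.

End logarithmic_potential.

Theorem lemma5 (R : realType) (C0 beta : R) :
  exists C Rad : R, forall rho : R * R -> R,
    (forall y, 0 <= rho y) ->
    (leb2 R).-integrable setT (EFin \o rho) ->
    (\int[leb2 R]_(y in setT) (rho y * ln (rho y))%:E <= C0%:E)%E ->
    (\int[leb2 R]_(y in setT) (rho y)%:E = beta%:E)%E ->
    (\int[leb2 R]_(y in setT) (sqnorm2 y * rho y)%:E <= C0%:E)%E ->
    forall x : R * R, Rad < norm2 x ->
      `| logpot rho x + beta / (2 * pi) * ln (norm2 x) | <= C.
Proof.
exists ((2 * pi)^-1 * (14 * beta + 10 * C0 + 48)), 1.
move=> rho rho_ge0 rho_integrable entropy_le mass_rho moment_le x.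
exact: logpot_deviation_le.
Qed.
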